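(* Let $G$ be a finitely generated discrete group and $q:\mathcal O_{\exp}(G)\to\mathbb R_+$ a continuous submultiplicative seminorm ($q(uv)\le q(u)q(v)$ for pointwise multiplication). Then (a) the support $\operatorname{supp}(q)=\{x\in G: q(1_x)\ne0\}$ is finite, and (b) $q(1_x)\ge1$ for every $x\in\operatorname{supp}(q)$.
   Context: A semicharacter is a function $f:G\to[1,\infty)$ with $f(xy)\le f(x)f(y)$. $\mathcal O_{\exp}(G)$ is the set of functions $u:G\to\mathbb C$ with $|u|\le f$ for some semicharacter $f$, with the locally convex inductive limit topology of the spaces $\mathbb Cf^{\blacksquare}=\bigcup_\lambda\lambda f^{\blacksquare}$, $f^{\blacksquare}=\{u:|u|\le f\}$, each with the topology in which a set is closed iff it meets every $\lambda f^{\blacksquare}$ in a set closed for pointwise convergence. $1_x$ is the characteristic function of $\{x\}$. *)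

From HB Require Import structures.
From mathcomp Require Import all_boot all_order all_algebra.
From mathcomp Require Import complex.
From mathcomp Require Import all_classical all_reals topology normedtype.
Import numFieldTopology.Exports.

Set Implicit Arguments.
Unset Strict Implicit.
Unset Printing Implicit Defensive.

Import Order.TTheory GRing.Theory Num.Theory.
Local Open Scope ring_scope.
Local Open Scope classical_set_scope.
Local Open Scope complex_scope.

(* A (discrete) group G is a MathComp [groupType] (boot/monoid.v), possibly infinite.
   The complex numbers are [R[i]] for a real field [R : realType]. *)

Definition finitely_generated (G : groupType) : Prop :=
  exists S : seq G, forall x : G, exists w : seq G,
    all (fun y => (y \in S) || ((y^-1)%g \in S)) w /\ x = (\prod_(y <- w) y)%g.

Definition semicharacter (G : groupType) (R : realType) (f : G -> R) : Prop :=
  (forall x, 1 <= f x) /\ (forall x y, f (x * y)%g <= f x * f y).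

Definition fball (G : groupType) (R : realType) (f : G -> R) (l : R) : set (G -> R[i]) :=
  [set u | forall x, `|u x| <= (l * f x)%:C].

Definition Cfball (G : groupType) (R : realType) (f : G -> R) : set (G -> R[i]) :=
  [set u | exists l : R, 0 < l /\ fball f l u].

Definition Oexp (G : groupType) (R : realType) : set (G -> R[i]) :=
  [set u | exists f : G -> R, semicharacter f /\ fball f 1 u].

Definition ptws_closed (G : groupType) (R : realType) (A : set (G -> R[i])) : Prop :=
  closed (A : set {ptws G -> (R[i])^o}).

Definition step_closed (G : groupType) (R : realType) (f : G -> R) (A : set (G -> R[i])) : Prop :=
  A `<=` Cfball f /\ forall l : R, 0 < l -> ptws_closed (A `&` fball f l).

Definition step_open (G : groupType) (R : realType) (f : G -> R) (U : set (G -> R[i])) : Prop :=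
  U `<=` Cfball f /\ step_closed f (Cfball f `\` U).

Definition fadd (G : groupType) (R : realType) (u v : G -> R[i]) : G -> R[i] :=
  fun x => u x + v x.
Definition fscale (G : groupType) (R : realType) (a : R[i]) (u : G -> R[i]) : G -> R[i] :=
  fun x => a * u x.
Definition fmul (G : groupType) (R : realType) (u v : G -> R[i]) : G -> R[i] :=
  fun x => u x * v x.

Definition topology_on (T : Type) (X : set T) (Tau : set (set T)) : Prop :=
  [/\ (forall U, Tau U -> U `<=` X), Tau X,
      (forall F : set (set T), F `<=` Tau -> Tau (\bigcup_(U in F) U)) &
      (forall U V, Tau U -> Tau V -> Tau (U `&` V))].

Definition lc_topology_on (G : groupType) (R : realType)
    (X : set (G -> R[i])) (Tau : set (set (G -> R[i]))) : Prop :=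
  [/\ topology_on X Tau,
      (forall u v, X u -> X v -> forall W, Tau W -> W (fadd u v) ->
         exists U V, [/\ Tau U, Tau V, U u, V v &
           forall u' v', U u' -> V v' -> W (fadd u' v')]),
      (forall (a : R[i]) u, X u -> forall W, Tau W -> W (fscale a u) ->
         exists (e : R) U, [/\ 0 < e, Tau U, U u &
           forall (b : R[i]) u', `|b - a| < e%:C -> U u' -> W (fscale b u')]) &
      (forall W, Tau W -> W (fun _ => 0) ->
         exists V, [/\ Tau V, V (fun _ => 0), V `<=` W &
           forall u v (t : R), V u -> V v -> 0 <= t <= 1 ->
             V (fadd (fscale t%:C u) (fscale (1 - t)%:C v))])].

(** admissible topologies on O_exp(G): locally convex topologies for which every
    inclusion C f^[] -> O_exp(G) (f a semicharacter) is continuous *)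
Definition Oexp_admissible (G : groupType) (R : realType) (Tau : set (set (G -> R[i]))) : Prop :=
  lc_topology_on (@Oexp G R) Tau /\
  forall f : G -> R, semicharacter f -> forall U, Tau U -> step_open f (U `&` Cfball f).

(** open sets of the locally convex inductive limit topology on O_exp(G):
    the topology generated by all admissible topologies (i.e. their supremum,
    the finest locally convex topology making all inclusions continuous). *)
Definition Oexp_open (G : groupType) (R : realType) (U : set (G -> R[i])) : Prop :=
  U `<=` @Oexp G R /\
  forall u, U u -> exists (n : nat) (T : 'I_n -> set (set (G -> R[i])))
                        (W : 'I_n -> set (G -> R[i])),
    (forall k, [/\ Oexp_admissible (T k), T k (W k) & W k u]) /\
    (forall v, @Oexp G R v -> (forall k, W k v) -> U v).

Definition Oexp_continuous (G : groupType) (R : realType) (q : (G -> R[i]) -> R) : Prop :=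
  forall O : set R, open O -> Oexp_open (@Oexp G R `&` (q @^-1` O)).

Definition submult_seminorm (G : groupType) (R : realType) (q : (G -> R[i]) -> R) : Prop :=
  [/\ (forall u, @Oexp G R u -> 0 <= q u),
      (forall u v, @Oexp G R u -> @Oexp G R v -> q (fadd u v) <= q u + q v),
      (forall (a : R[i]) u, @Oexp G R u -> (q (fscale a u))%:C = `|a| * (q u)%:C) &
      (forall u v, @Oexp G R u -> @Oexp G R v -> q (fmul u v) <= q u * q v)].

Definition indic (G : groupType) (R : realType) (x : G) : G -> R[i] :=
  fun y => if y == x then 1 else 0.

Definition qsupp (G : groupType) (R : realType) (q : (G -> R[i]) -> R) : set G :=
  [set x | q (@indic G R x) != 0].

(* Each [1_x] is idempotent, so [q(1_x) <= q(1_x)^2], which forces [q(1_x) = 0]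
   or [q(1_x) >= 1].  The indicators all lie in the unit ball of the constant
   semicharacter [1] and tend pointwise to [0] along the cofinite filter; since
   the ball carries the pointwise topology, every neighbourhood of [0] for the
   inductive limit topology contains [1_x] for cofinitely many [x].  Applied to
   [{q < 1}] this leaves only finitely many [x] with [q(1_x) >= 1]. *)

From HB Require Import structures.
From mathcomp Require Import all_boot all_order all_algebra.
From mathcomp Require Import complex.
From mathcomp Require Import all_classical all_reals topology normedtype.
Import numFieldTopology.Exports.

Set Implicit Arguments.
Unset Strict Implicit.
Unset Printing Implicit Defensive.
Import Order.TTheory GRing.Theory Num.Theory.
Local Open Scope ring_scope.
Local Open Scope classical_set_scope.

Section IndicatorsInOexp.
Variables (G : groupType) (R : realType).

Lemma semicharacter_cst1 : semicharacter (fun _ : G => (1 : R)).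
Proof. by split => // x y; rewrite mulr1. Qed.

Lemma fball_cst1_indic (x : G) : fball (fun _ : G => (1 : R)) 1 (indic R x).
Proof. by move=> y; rewrite /indic mulr1; case: ifP; rewrite ?normr1 ?normr0. Qed.

Lemma Oexp_indic (x : G) : Oexp (indic R x).
Proof.
by exists (fun _ => 1); split; [exact: semicharacter_cst1 | exact: fball_cst1_indic].
Qed.

Lemma Oexp0 : Oexp (fun _ : G => (0 : R[i])).
Proof.
exists (fun _ => 1); split; first exact: semicharacter_cst1.
by move=> y; rewrite normr0 mulr1.
Qed.

Lemma fmul_indicxx (x : G) : fmul (indic R x) (indic R x) = indic R x.
Proof. by apply: funext => y; rewrite /fmul /indic; case: ifP; rewrite ?mulr1 ?mulr0. Qed.

End IndicatorsInOexp.

Section SubmultSeminorm.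
Variables (G : groupType) (R : realType) (q : (G -> R[i]) -> R).
Hypothesis q_submult : submult_seminorm q.

Lemma submult_seminorm0 : q (fun _ => 0) = 0.
Proof.
have [_ _ qZ _] := q_submult.
have := qZ 0 _ (Oexp0 G R); rewrite normr0 mul0r.
have -> : fscale 0 (fun _ : G => (0 : R[i])) = (fun _ => 0).
  by apply: funext => y; rewrite /fscale mul0r.
by case.
Qed.

Lemma submult_seminorm_idem_ge1 (u : G -> R[i]) :
  Oexp u -> fmul u u = u -> q u != 0 -> 1 <= q u.
Proof.
move=> Ou uu qu_neq0; have [q_ge0 _ _ qM] := q_submult.
have qu_gt0 : 0 < q u by rewrite lt_def qu_neq0 q_ge0.
by rewrite -(ler_pM2l qu_gt0) mulr1 -{1}uu qM.
Qed.

Lemma qsupp_indic_ge1 (x : G) : qsupp q x -> 1 <= q (indic R x).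
Proof.
by apply: submult_seminorm_idem_ge1; [exact: Oexp_indic | exact: fmul_indicxx].
Qed.

End SubmultSeminorm.

Section CofiniteIndicators.
Variables (G : groupType) (R : realType).
Hypothesis G_infinite : infinite_set [set: G].

Let frechet_G := frechet_properfilter G_infinite.
#[local] Existing Instance frechet_G.
Let cofinite : set_system G := @frechet_filter G.

Lemma indic_ptws_cvg0 :
  (@indic G R : G -> {ptws G -> (R[i])^o}) @ cofinite -->
  ((fun _ => 0) : {ptws G -> (R[i])^o}).
Proof.
apply/(@pointwise_cvgP (discrete_topology G) (R[i])^o) => t.
apply: cvg_near_cst; apply: (sub_finite_set _ (finite_set1 t)) => x /= indic_xt.
apply/eqP; apply: contra_notT indic_xt => x_neq_t.
by rewrite /indic eq_sym (negbTE x_neq_t).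
Qed.

(* The trace of [W] on the unit ball of the constant semicharacter [1] is a
   neighbourhood of [0] for pointwise convergence, by admissibility of [T]. *)
Lemma admissible_indic_near0 (T : set (set (G -> R[i]))) (W : set (G -> R[i])) :
  Oexp_admissible T -> T W -> W (fun _ => 0) ->
  \forall x \near cofinite, W (indic R x).
Proof.
move=> [_ T_step] TW W0.
have := (T_step _ (@semicharacter_cst1 G R) _ TW).2.2 1 ltr01.
set B := (X in ptws_closed X) => closedB.
have nbhs0_notB : nbhs ((fun _ => 0) : {ptws G -> (R[i])^o}) (~` B).
  apply: open_nbhs_nbhs; split; first by rewrite openC.
  by rewrite /B => -[[Cfball0 notWCfball0] _]; apply: notWCfball0.
have near_notB : cofinite (indic R @^-1` (~` B)) := indic_ptws_cvg0 nbhs0_notB.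
apply: filterS near_notB => x /= notBx.
apply: contra_notP notBx => notWx; split; last exact: fball_cst1_indic.
split; last by case.
by exists 1; split; [exact: ltr01 | exact: fball_cst1_indic].
Qed.

Lemma Oexp_open_indic_near0 (U : set (G -> R[i])) :
  Oexp_open U -> U (fun _ => 0) -> \forall x \near cofinite, U (indic R x).
Proof.
move=> [_ U_open] U0; have [n [T [W [TW W_U]]]] := U_open _ U0.
have W_near k : \forall x \near cofinite, W k (indic R x).
  by have [admT TWk Wk0] := TW k; exact: admissible_indic_near0 admT TWk Wk0.
apply: filterS (filter_forall _ W_near) => x Wx.
by apply: W_U => //; exact: Oexp_indic.
Qed.

End CofiniteIndicators.

Lemma qsupp_finite (G : groupType) (R : realType) (q : (G -> R[i]) -> R) :
  submult_seminorm q -> Oexp_continuous q -> finite_set (qsupp q).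
Proof.
move=> q_submult q_cont.
have [G_finite | G_infinite] := pselect (finite_set [set: G]).
  exact: sub_finite_set G_finite.
have [U_sub U_open] := q_cont _ (@open_lt _ 1).
have U0 : (@Oexp G R `&` q @^-1` [set r | r < 1]) (fun _ : G => 0).
  by split; [exact: Oexp0 | rewrite /= submult_seminorm0 // ltr01].
have cofinite_lt1 := Oexp_open_indic_near0 G_infinite (conj U_sub U_open) U0.
apply: (sub_finite_set _ cofinite_lt1).
move=> x supp_x /= [_ /= q_lt1].
by have := qsupp_indic_ge1 q_submult supp_x; rewrite leNgt q_lt1.
Qed.

Theorem mainTheorem13 (G : groupType) (R : realType) (q : (G -> R[i]) -> R) :
  finitely_generated G ->
  submult_seminorm q ->
  Oexp_continuous q ->
  finite_set (qsupp q) /\ (forall x, qsupp q x -> 1 <= q (indic R x)).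
Proof.
move=> _ q_submult q_cont; split; first exact: qsupp_finite.
by move=> x; exact: qsupp_indic_ge1.
Qed.
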